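(* Let $R$ be a generalized reductive root system in $\mathcal V$ and let $R_1\subseteq R$ with $R_1^\times:=R_1\cap R^\times\ne\emptyset$. Suppose that (a) $R_1=-R_1$; (b) $\{\delta\in R^0:\alpha'+\delta\in R_1\text{ for some }\alpha'\in R_1^\times\}\subseteq R_1$; (c) if $\alpha'\in R_1$, $\beta\in R$ and $(\alpha',\beta)\ne0$, then $\beta\in R_1$. Then $R_1$ is a generalized reductive root system in its real span (with the restricted form). Moreover, $R_1'=R_1^\times\cup(\langle R_1\rangle\cap R^0)$ is also a generalized reductive root system in the real span of $R_1$.
   Context: Let $\mathcal V$ be a nontrivial finite-dimensional real vector space with a nontrivial positive semidefinite symmetric bilinear form $(\cdot,\cdot)$. For $R\subseteq\mathcal V$ let $R^\times=\{\alpha\in R:(\alpha,\alpha)\ne0\}$, $R^0=\{\alpha\in R:(\alpha,\alpha)=0\}$, and $(\beta,\alpha^\vee)=2(\beta,\alpha)/(\alpha,\alpha)$. $R$ is a generalized reductive root system in $\mathcal V$ if: (R1) $R=-R$; (R2) $R$ spans $\mathcal V$; (R3) $R$ is discrete in $\mathcal V$; (R4) for $\alpha\in R^\times$ and $\beta\in R$ there are nonnegative integers $u,d$ such that for $n\in\mathbb Z$, $\beta+n\alpha\in R$ iff $-d\le n\le u$, and $d-u=(\beta,\alpha^\vee)$; (R5) $\alpha\in R^\times\Rightarrow2\alpha\notin R$. $\langle S\rangle$ denotes the $\mathbb Z$-span of $S$. *)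

From HB Require Import structures.
From mathcomp Require Import all_boot all_order all_algebra.
From mathcomp Require Import reals.
Set Implicit Arguments. Unset Strict Implicit. Unset Printing Implicit Defensive.
Import Order.TTheory GRing.Theory Num.Theory.
Local Open Scope ring_scope.

(* The ambient finite-dimensional real vector space is modelled as 'rV[R]_n;
   the symmetric bilinear form is given by a matrix A : (u,v) = u A v^T. *)
Definition bform {R : realType} {n : nat} (A : 'M[R]_n) (u v : 'rV[R]_n) : R :=
  (u *m A *m v^T) 0 0.

Definition rspan {R : realType} {n : nat} (S : 'rV[R]_n -> Prop) (v : 'rV[R]_n) : Prop :=
  exists (k : nat) (vs : 'I_k -> 'rV[R]_n) (cs : 'I_k -> R),
    (forall i, S (vs i)) /\ v = \sum_(i < k) cs i *: vs i.

Definition zspan {R : realType} {n : nat} (S : 'rV[R]_n -> Prop) (v : 'rV[R]_n) : Prop :=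
  exists (k : nat) (vs : 'I_k -> 'rV[R]_n) (cs : 'I_k -> int),
    (forall i, S (vs i)) /\ v = \sum_(i < k) vs i *~ cs i.

Definition coroot_pair {R : realType} {n : nat} (A : 'M[R]_n) (b a : 'rV[R]_n) : R :=
  2 * bform A b a / bform A a a.

Definition discrete_set {R : realType} {n : nat} (S : 'rV[R]_n -> Prop) : Prop :=
  forall a, S a -> exists e : R, 0 < e /\
    forall b, S b -> (forall i, `|b 0 i - a 0 i| < e) -> b = a.

(* S is a generalized reductive root system in the subspace W (with the form
   restricted to W). *)
Definition GRRS {R : realType} {n : nat} (A : 'M[R]_n)
    (W : 'rV[R]_n -> Prop) (S : 'rV[R]_n -> Prop) : Prop :=
  (exists w, W w /\ w != 0) /\
      (exists u v, W u /\ W v /\ bform A u v != 0) /\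
      (forall a, S a <-> S (- a)) /\
      (forall v, W v <-> rspan S v) /\
      discrete_set S /\
      (forall a b, S a -> bform A a a != 0 -> S b ->
                 exists u d : nat,
                   (forall k : int, S (b + a *~ k) <-> ((- (d%:Z) <= k) && (k <= u%:Z))%R)
                   /\ (d%:R - u%:R : R) = coroot_pair A b a) /\
      (forall a, S a -> bform A a a != 0 -> ~ S (2%:R *: a)).

From HB Require Import structures.
From mathcomp Require Import all_boot all_order all_algebra.
From mathcomp Require Import reals zify lra.
Import Order.TTheory GRing.Theory Num.Theory.

(* The other axioms pass to subsets of R, so everything reduces to closure
   under root strings: if a in R1 is anisotropic, b in R1 and b + k a in R,
   then b + k a in R1.  When (a, b + k a) <> 0 this is (c).  Otherwise, for
   k > 0 (k < 0 is the same with -a), the a-string through b gives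
   b + (k-1) a in R; it pairs with a to -(a, a) <> 0, so it lies in R1 by (c),
   and then b + k a = (b + (k-1) a) + a lies in R1 by (b) if it is isotropic
   and by (c) otherwise.  For R1' the only new case is an isotropic b: by
   positive semidefiniteness b is orthogonal to everything, so
   (a, b + k a) = k (a, a) vanishes only for k = 0. *)

Set Implicit Arguments.
Unset Strict Implicit.
Unset Printing Implicit Defensive.
Local Open Scope ring_scope.

Section BilinearForm.
Variables (R : realType) (n : nat) (A : 'M[R]_n).
Implicit Types (u v w : 'rV[R]_n).

Lemma bformDl u v w : bform A (u + v) w = bform A u w + bform A v w.
Proof. by rewrite /bform !mulmxDl mxE. Qed.

Lemma bformDr u v w : bform A u (v + w) = bform A u v + bform A u w.
Proof. by rewrite /bform linearD /= mulmxDr mxE. Qed.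

Lemma bformZl c u v : bform A (c *: u) v = c * bform A u v.
Proof. by rewrite /bform -!scalemxAl mxE. Qed.

Lemma bformZr c u v : bform A u (c *: v) = c * bform A u v.
Proof. by rewrite /bform linearZ /= -scalemxAr mxE. Qed.

Lemma bformNl u v : bform A (- u) v = - bform A u v.
Proof. by rewrite -scaleN1r bformZl mulN1r. Qed.

Lemma bformNr u v : bform A u (- v) = - bform A u v.
Proof. by rewrite -scaleN1r bformZr mulN1r. Qed.

Lemma bformBl u v w : bform A (u - v) w = bform A u w - bform A v w.
Proof. by rewrite bformDl bformNl. Qed.

Lemma bformBr u v w : bform A u (v - w) = bform A u v - bform A u w.
Proof. by rewrite bformDr bformNr. Qed.

Lemma bformMzr u v (k : int) : bform A u (v *~ k) = k%:~R * bform A u v.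
Proof. by rewrite -scaler_int bformZr. Qed.

Lemma bformNN u : bform A (- u) (- u) = bform A u u.
Proof. by rewrite bformNl bformNr opprK. Qed.

Lemma bform0l v : bform A 0 v = 0.
Proof. by rewrite -(scale0r 0) bformZl mul0r. Qed.

Hypothesis Asym : A^T = A.

Lemma bformC u v : bform A u v = bform A v u.
Proof.
have entry_trmx (M : 'M[R]_1) : M 0 0 = M^T 0 0 by rewrite mxE.
by rewrite /bform entry_trmx !trmx_mul trmxK Asym mulmxA.
Qed.

Hypothesis Apsd : forall u, 0 <= bform A u u.

Lemma bform_isotropic_orth u v : bform A v v = 0 -> bform A u v = 0.
Proof.
move=> vv; set x := bform A u u; set y := bform A u v.
have x_ge0 : 0 <= x := Apsd u.
(* the form takes the value -(x + 2) y^2 at this vector *)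
have := Apsd ((x + 1) *: v - y *: u).
rewrite bformBl !bformBr !bformZl !bformZr vv (bformC v u) -/x -/y => Q_ge0.
have : y * y <= 0 by nra.
by rewrite -expr2 le_eqVlt ltNge sqr_ge0 orbF sqrf_eq0 => /eqP.
Qed.

End BilinearForm.

Definition ord_cat (T : Type) (k1 k2 : nat) (f1 : 'I_k1 -> T) (f2 : 'I_k2 -> T)
    (i : 'I_(k1 + k2)) : T :=
  match split i with inl j => f1 j | inr j => f2 j end.

Lemma ord_cat_lshift T k1 k2 (f1 : 'I_k1 -> T) (f2 : 'I_k2 -> T) i :
  ord_cat f1 f2 (lshift k2 i) = f1 i.
Proof. by rewrite /ord_cat (unsplitK (inl i)). Qed.

Lemma ord_cat_rshift T k1 k2 (f1 : 'I_k1 -> T) (f2 : 'I_k2 -> T) i :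
  ord_cat f1 f2 (rshift k1 i) = f2 i.
Proof. by rewrite /ord_cat (unsplitK (inr i)). Qed.

Lemma ord_catP T (P : T -> Prop) k1 k2 (f1 : 'I_k1 -> T) (f2 : 'I_k2 -> T) :
  (forall i, P (f1 i)) -> (forall i, P (f2 i)) -> forall i, P (ord_cat f1 f2 i).
Proof. by move=> P1 P2 i; rewrite /ord_cat; case: split. Qed.

Lemma sum_ord_cat (C : Type) (V : nmodType) (act : C -> V -> V) k1 k2
    (cs1 : 'I_k1 -> C) (vs1 : 'I_k1 -> V) (cs2 : 'I_k2 -> C) (vs2 : 'I_k2 -> V) :
  \sum_(i < k1 + k2) act (ord_cat cs1 cs2 i) (ord_cat vs1 vs2 i) =
  \sum_(i < k1) act (cs1 i) (vs1 i) + \sum_(i < k2) act (cs2 i) (vs2 i).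
Proof.
by rewrite big_split_ord; congr (_ + _); apply: eq_bigr => i _;
  rewrite ?ord_cat_lshift ?ord_cat_rshift.
Qed.

Section Spans.
Variables (R : realType) (n : nat).
Implicit Types (S T : 'rV[R]_n -> Prop) (v w : 'rV[R]_n).

Lemma rspan_in S v : S v -> rspan S v.
Proof. by exists 1%N, (fun=> v), (fun=> 1); rewrite big_ord1 scale1r. Qed.

Lemma rspan0 S : rspan S 0.
Proof. by exists 0%N, (fun=> 0), (fun=> 0); rewrite big_ord0; split=> [[]|]. Qed.

Lemma rspanZ S c v : rspan S v -> rspan S (c *: v).
Proof.
move=> [k [vs [cs [Svs ->]]]]; exists k, vs, (fun i => c * cs i); split=> //.
by rewrite scaler_sumr; apply: eq_bigr => i _; rewrite scalerA.
Qed.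

Lemma rspanD S v w : rspan S v -> rspan S w -> rspan S (v + w).
Proof.
move=> [k1 [vs1 [cs1 [Svs1 ->]]]] [k2 [vs2 [cs2 [Svs2 ->]]]].
exists (k1 + k2)%N, (ord_cat vs1 vs2), (ord_cat cs1 cs2); split.
  exact: ord_catP.
by rewrite (sum_ord_cat (fun (c : R) (x : 'rV[R]_n) => c *: x)).
Qed.

Lemma rspan_sub S T v : (forall w, S w -> rspan T w) -> rspan S v -> rspan T v.
Proof.
move=> ST [k [vs [cs [Svs ->]]]]; elim: k vs cs Svs => [|k IHk] vs cs Svs.
  by rewrite big_ord0; apply: rspan0.
rewrite big_ord_recr /=; apply: rspanD; last by apply/rspanZ/ST.
pose widen i := widen_ord (leqnSn k) i.
exact: (IHk (fun i => vs (widen i)) (fun i => cs (widen i))).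
Qed.

Lemma zspan_in S v : S v -> zspan S v.
Proof. by exists 1%N, (fun=> v), (fun=> 1); rewrite big_ord1 mulr1z. Qed.

Lemma zspanD S v w : zspan S v -> zspan S w -> zspan S (v + w).
Proof.
move=> [k1 [vs1 [cs1 [Svs1 ->]]]] [k2 [vs2 [cs2 [Svs2 ->]]]].
exists (k1 + k2)%N, (ord_cat vs1 vs2), (ord_cat cs1 cs2); split.
  exact: ord_catP.
by rewrite (sum_ord_cat (fun (c : int) (x : 'rV[R]_n) => x *~ c)).
Qed.

Lemma zspanMz S v (z : int) : zspan S v -> zspan S (v *~ z).
Proof.
move=> [k [vs [cs [Svs ->]]]]; exists k, vs, (fun i => cs i * z); split=> //.
by rewrite mulrz_suml; apply: eq_bigr => i _; rewrite mulrzA.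
Qed.

Lemma zspan_rspan S v : zspan S v -> rspan S v.
Proof.
move=> [k [vs [cs [Svs ->]]]]; exists k, vs, (fun i => (cs i)%:~R); split=> //.
by apply: eq_bigr => i _; rewrite scaler_int.
Qed.

End Spans.

Definition string_closed (R : realType) (n : nat) (A : 'M[R]_n)
    (Rt S : 'rV[R]_n -> Prop) : Prop :=
  forall a b (k : int), S a -> bform A a a != 0 -> S b ->
    Rt (b + a *~ k) -> S (b + a *~ k).

Section Subsystems.
Variables (R : realType) (n : nat) (A : 'M[R]_n).
Implicit Types (W Rt S T : 'rV[R]_n -> Prop) (a b v : 'rV[R]_n).

Lemma discrete_setS S T : discrete_set T -> (forall v, S v -> T v) -> discrete_set S.
Proof.
move=> discT ST a /ST /discT [e [e_gt0 isoT]].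
by exists e; split=> // b /ST; apply: isoT.
Qed.

Lemma anisotropic_neq0 a : bform A a a != 0 -> a != 0.
Proof. by apply: contra => /eqP->; rewrite bform0l. Qed.

Lemma root_string_prev W0 Rt a b (k : int) : GRRS A W0 Rt ->
  Rt a -> bform A a a != 0 -> Rt b -> 0 < k ->
  Rt (b + a *~ k) -> Rt (b + a *~ (k - 1)).
Proof.
move=> [_ [_ [_ [_ [_ [strings _]]]]]] Rta aa Rtb k_gt0.
have [u [d [string _]]] := strings a b Rta aa Rtb.
by move=> /string/andP [dk ku]; apply/string/andP; split; lia.
Qed.

Lemma GRRS_subsystem W0 W Rt S : GRRS A W0 Rt ->
  (forall v, S v -> Rt v) -> (exists a, S a /\ bform A a a != 0) ->
  (forall v, S v <-> S (- v)) -> (forall v, W v <-> rspan S v) ->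
  string_closed A Rt S -> GRRS A W S.
Proof.
move=> [_ [_ [_ [_ [discRt [strings reduced]]]]]] SRt [a [Sa aa]] SN WS closedS.
have Wa : W a by apply/WS/rspan_in.
split; first by exists a; split; last exact: anisotropic_neq0.
split; first by exists a, a.
do 3!split=> //; first exact: discrete_setS discRt SRt.
split=> [a' b Sa' a'a' Sb | a' Sa' a'a' /SRt]; last exact: reduced (SRt _ Sa') a'a'.
have [u [d [string ud]]] := strings a' b (SRt a' Sa') a'a' (SRt b Sb).
exists u, d; split=> // k; split=> [/SRt/string // | /string].
exact: closedS.
Qed.

End Subsystems.

Section StringClosure.
Variables (R : realType) (n : nat) (A : 'M[R]_n) (W0 Rt S : 'rV[R]_n -> Prop).
Hypothesis rootsRt : GRRS A W0 Rt.
Hypothesis S_sub : forall v, S v -> Rt v.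
Hypothesis S_oppr : forall v, S v <-> S (- v).
Hypothesis S_isotropic_translate : forall d, Rt d -> bform A d d = 0 ->
  (exists a, S a /\ bform A a a != 0 /\ S (a + d)) -> S d.
Hypothesis S_nonorth : forall a b, S a -> Rt b -> bform A a b != 0 -> S b.

Lemma closed_orth_translate e g : S e -> bform A e e != 0 -> Rt g ->
  S (g - e) -> bform A e g = 0 -> S g.
Proof.
move=> Se ee Rtg Sge eg; have [gg|gg] := eqVneq (bform A g g) 0.
  apply: S_isotropic_translate => //; exists (- e).
  by rewrite bformNN addrC; split=> //; apply: (S_oppr e).1.
by apply: (S_nonorth Sge) => //; rewrite bformBl eg subr0.
Qed.

Lemma string_closed_pos a b (k : int) : S a -> bform A a a != 0 -> S b -> 0 < k ->
  Rt (b + a *~ k) -> S (b + a *~ k).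
Proof.
move=> Sa aa Sb k_gt0 Rtg; have [ag|] := eqVneq (bform A a (b + a *~ k)) 0;
  last exact: S_nonorth.
have prev : b + a *~ (k - 1) = b + a *~ k - a by rewrite mulrzBr mulr1z addrA.
have Sprev : S (b + a *~ (k - 1)).
  apply: (S_nonorth Sa).
    exact: root_string_prev rootsRt (S_sub Sa) aa (S_sub Sb) k_gt0 Rtg.
  by rewrite prev bformBr ag sub0r oppr_eq0.
by apply: (closed_orth_translate Sa) => //; rewrite -prev.
Qed.

Lemma string_closed_subsystem : string_closed A Rt S.
Proof.
move=> a b k Sa aa Sb; case: (ltgtP k 0) => [k_lt0|k_gt0|->].
- have -> : a *~ k = (- a) *~ (- k) by rewrite mulNrz mulrNz opprK.
  by apply: string_closed_pos; rewrite ?oppr_gt0 ?bformNN //; apply: (S_oppr a).1.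
- exact: string_closed_pos.
- by rewrite mulr0z addr0.
Qed.

End StringClosure.

Definition isotropic_completion (R : realType) (n : nat) (A : 'M[R]_n)
    (Rt S : 'rV[R]_n -> Prop) (v : 'rV[R]_n) : Prop :=
  (S v /\ bform A v v != 0) \/ (zspan S v /\ Rt v /\ bform A v v = 0).

Section IsotropicCompletion.
Variables (R : realType) (n : nat) (A : 'M[R]_n) (W0 Rt S : 'rV[R]_n -> Prop).
Hypothesis Asym : A^T = A.
Hypothesis Apsd : forall u, 0 <= bform A u u.
Hypothesis rootsRt : GRRS A W0 Rt.
Hypothesis S_sub : forall v, S v -> Rt v.
Hypothesis S_oppr : forall v, S v <-> S (- v).
Hypothesis S_nonorth : forall a b, S a -> Rt b -> bform A a b != 0 -> S b.
Hypothesis S_strings : string_closed A Rt S.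

Local Notation S' := (isotropic_completion A Rt S).

Lemma completion_sub v : S' v -> Rt v.
Proof. by case=> [[/S_sub]|[_ []]]. Qed.

Lemma completion_zspan v : S' v -> zspan S v.
Proof. by case=> [[/zspan_in]|[]]. Qed.

Lemma completion_anisotropic v : S' v -> bform A v v != 0 -> S v.
Proof. by case=> [[]|[_ [_ ->]]]; rewrite ?eqxx. Qed.

Lemma in_completion v : S v -> S' v.
Proof.
move=> Sv; have [vv|vv] := eqVneq (bform A v v) 0; [right|by left].
by split; [apply: zspan_in | split=> //; apply: S_sub].
Qed.

Lemma completion_oppr v : S' v -> S' (- v).
Proof.
have [_ [_ [Rt_oppr _]]] := rootsRt.
rewrite /isotropic_completion bformNN -mulrN1z.
case=> [[/S_oppr Sv vv]|[Zv [/Rt_oppr Rtv vv]]]; first by left; rewrite mulrN1z.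
by right; split; [apply: zspanMz | rewrite mulrN1z].
Qed.

Lemma rspan_completion v : rspan S' v <-> rspan S v.
Proof.
split; apply: rspan_sub => w.
  by move/completion_zspan/zspan_rspan.
by move/in_completion/rspan_in.
Qed.

Lemma string_closed_completion : string_closed A Rt S'.
Proof.
move=> a b k S'a aa S'b Rtg; have Sa := completion_anisotropic S'a aa.
have [gg|gg] := eqVneq (bform A (b + a *~ k) (b + a *~ k)) 0.
  right; split=> //; apply: zspanD; first exact: completion_zspan.
  exact/zspanMz/zspan_in.
left; split=> //; case: S'b => [[Sb _]|[_ [_ bb]]]; first exact: S_strings.
have [ag|] := eqVneq (bform A a (b + a *~ k)) 0; last exact: S_nonorth.
move: ag; rewrite bformDr bformMzr (bform_isotropic_orth Asym Apsd _ bb) add0r.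
move=> /eqP; rewrite mulf_eq0 (negbTE aa) orbF intr_eq0 => /eqP k0.
by move: gg; rewrite k0 mulr0z addr0 bb eqxx.
Qed.

End IsotropicCompletion.

Theorem lemma2p1 (R : realType) (n : nat) (A : 'M[R]_n)
  (Asym : A^T = A) (Apsd : forall u : 'rV[R]_n, 0 <= bform A u u) (Anz : A != 0)
  (Rt R1 : 'rV[R]_n -> Prop)
  (HR : GRRS A (fun _ => True) Rt)
  (Hsub : forall v, R1 v -> Rt v)
  (Hne : exists a, R1 a /\ bform A a a != 0)
  (Ha : forall v, R1 v <-> R1 (- v))
  (Hb : forall d, Rt d -> bform A d d = 0 ->
          (exists a', R1 a' /\ bform A a' a' != 0 /\ R1 (a' + d)) -> R1 d)
  (Hc : forall a' b, R1 a' -> Rt b -> bform A a' b != 0 -> R1 b) :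
  GRRS A (rspan R1) R1 /\
  GRRS A (rspan R1)
    (fun v => (R1 v /\ bform A v v != 0) \/ (zspan R1 v /\ Rt v /\ bform A v v = 0)).
Proof.
have closedR1 : string_closed A Rt R1 := string_closed_subsystem HR Hsub Ha Hb Hc.
split; first exact: GRRS_subsystem HR Hsub Hne Ha (fun v => iff_refl _) closedR1.
have [a [R1a aa]] := Hne.
change (GRRS A (rspan R1) (isotropic_completion A Rt R1)).
apply: (GRRS_subsystem HR (completion_sub Hsub)).
- by exists a; split=> //; left.
- by move=> v; split=> /(completion_oppr HR Ha); rewrite ?opprK.
- by move=> v; apply: iff_sym; apply: rspan_completion.
- exact: string_closed_completion Asym Apsd Hc closedR1.
Qed.
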